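(* Let $\mathcal{R}$ be a commutative ring with unity and let $P$ be a locally finite poset with at least three elements in which every maximal chain is infinite. Then for every additive biderivation $b$ of $I(P,\mathcal{R})$ there exist scalars $\lambda^i_j\in\mathcal{R}$ ($i\in\mathcal{I}$, $j\in\mathcal{J}_i$) such that for all $\alpha,\beta\in I(P,\mathcal{R})$, $$b(\alpha,\beta)=\sum_{i\in\mathcal{I}}\sum_{j\in\mathcal{J}_i}\lambda^i_j[\alpha^i_j,\beta^i_j],$$ where $\alpha^i_j=\sum_{x\le y,\ x,y\in P^i_j}\alpha_{xy}e_{xy}$ and similarly for $\beta$; i.e. $b$ is a sum of (restricted) inner biderivations.
   Context: $I(P,\mathcal{R})$ is the incidence algebra: functions $f:P\times P\to\mathcal{R}$ with $f(x,y)=0$ unless $x\le y$, with product $(fg)(x,y)=\sum_{x\le z\le y}f(x,z)g(z,y)$; $f_{xy}=f(x,y)$, $e_{xy}$ ($x\le y$) is the function equal to $1$ at $(x,y)$ and $0$ elsewhere, and sums are entrywise. $[\alpha,\beta]=\alpha\beta-\beta\alpha$. An additive biderivation is a map $b$ of two arguments, additive in each, with $b(\alpha\beta,\gamma)=\alpha b(\beta,\gamma)+b(\alpha,\gamma)\beta$ and $b(\alpha,\beta\gamma)=\beta b(\alpha,\gamma)+b(\alpha,\beta)\gamma$. The connected components $P^i$ ($i\in\mathcal{I}$) are the classes of the equivalence relation ''joined by a finite sequence of successively comparable elements''. A maximal chain is a totally ordered subset to which no element can be added keeping it totally ordered. For $Q=P^i$, let $L$ be its set of maximal chains; write $l'\approx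 l''$ if there exist $x<y$ with $x,y\in l'\cap l''$; call $l',l''$ connected if $l'\approx l_0\approx\cdots\approx l_n\approx l''$ for some maximal chains $l_0,\dots,l_n$; let $\{L_j\}_{j\in\mathcal{J}_i}$ be the equivalence classes and $P^i_j=\{x\in P^i: x\in l\text{ for some }l\in L_j\}$. *)

From HB Require Import structures.
From mathcomp Require Import all_boot all_order all_algebra.
From Stdlib Require Import ClassicalEpsilon.
From Stdlib Require Relations List.
Set Implicit Arguments. Unset Strict Implicit. Unset Printing Implicit Defensive.
Import Order.TTheory GRing.Theory.
Local Open Scope order_scope.

Section Incidence.
Context {d : Order.disp_t} {P : porderType d}.

Definition locally_finite : Prop :=
  forall x y : P, exists s : seq P, forall z, (x <= z <= y) <-> z \in s.

(* an enumeration (without duplicates) of the interval [x,y], chosen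
   classically; it is correct whenever the interval is finite *)
Definition itv (x y : P) : seq P :=
  epsilon (inhabits [::])
    (fun s : seq P => uniq s /\ forall z, (x <= z <= y) <-> z \in s).

Definition finite_set (A : P -> Prop) : Prop :=
  exists s : seq P, forall z, A z -> z \in s.

Definition is_chain (l : P -> Prop) : Prop :=
  forall a b, l a -> l b -> (a <= b) || (b <= a).

Definition maximal_chain_in (Q l : P -> Prop) : Prop :=
  (forall a, l a -> Q a) /\ is_chain l /\
  forall l' : P -> Prop, (forall a, l a -> l' a) -> (forall a, l' a -> Q a) ->
     is_chain l' -> forall a, l' a -> l a.

Definition maximal_chain (l : P -> Prop) : Prop :=
  maximal_chain_in (fun _ => True) l.

Definition comparable_rel (x y : P) : Prop := (x <= y) || (y <= x).

Definition connectedP (x y : P) : Prop :=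
  Relation_Operators.clos_refl_trans P comparable_rel x y.

Definition is_component (Q : P -> Prop) : Prop :=
  exists x, Q = connectedP x.

Definition chain_approx (l1 l2 : P -> Prop) : Prop :=
  exists x y, (x < y) /\ l1 x /\ l1 y /\ l2 x /\ l2 y.

Definition chain_connected (Q : P -> Prop) (l1 l2 : P -> Prop) : Prop :=
  Relation_Operators.clos_refl_trans (P -> Prop)
    (fun a b => maximal_chain_in Q a /\ maximal_chain_in Q b /\ chain_approx a b)
    l1 l2.

(* C is an equivalence class L_j of maximal chains of the component Q *)
Definition is_chain_class (Q : P -> Prop) (C : (P -> Prop) -> Prop) : Prop :=
  exists l, maximal_chain_in Q l /\
    C = (fun l' => maximal_chain_in Q l' /\ chain_connected Q l l').

Definition class_support (C : (P -> Prop) -> Prop) (x : P) : Prop :=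
  exists l, C l /\ l x.

End Incidence.

Section Algebra.
Context {d : Order.disp_t} {P : porderType d} {R : comPzRingType}.
Local Open Scope ring_scope.

(* elements of I(P,R) are the functions f : P -> P -> R vanishing off <= *)
Definition incidence (f : P -> P -> R) : Prop :=
  forall x y, ~~ (x <= y)%O -> f x y = 0.

Definition iadd (f g : P -> P -> R) : P -> P -> R := fun x y => f x y + g x y.
Definition isub (f g : P -> P -> R) : P -> P -> R := fun x y => f x y - g x y.
Definition imul (f g : P -> P -> R) : P -> P -> R :=
  fun x y => \sum_(z <- itv x y) f x z * g z y.
Definition icomm (f g : P -> P -> R) : P -> P -> R := isub (imul f g) (imul g f).

Definition irestr (A : P -> Prop) (f : P -> P -> R) : P -> P -> R :=
  fun x y => if excluded_middle_informative (A x /\ A y) then f x y else 0.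

Definition is_biderivation (b : (P -> P -> R) -> (P -> P -> R) -> (P -> P -> R)) : Prop :=
  forall a1 a2 a3, incidence a1 -> incidence a2 -> incidence a3 ->
    [/\ incidence (b a1 a2),
        b (iadd a1 a2) a3 = iadd (b a1 a3) (b a2 a3),
        b a1 (iadd a2 a3) = iadd (b a1 a2) (b a1 a3),
        b (imul a1 a2) a3 = iadd (imul a1 (b a2 a3)) (imul (b a1 a3) a2)
      & b a1 (imul a2 a3) = iadd (imul a2 (b a1 a3)) (imul (b a1 a2) a3)].

End Algebra.

From HB Require Import structures.
From mathcomp Require Import all_boot all_order all_algebra.
From Stdlib Require Import ClassicalEpsilon FunctionalExtensionality PropExtensionality.
From Stdlib Require List Relations.
From mathcomp Require Import ring.
Set Implicit Arguments. Unset Strict Implicit. Unset Printing Implicit Defensive.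
Import Order.TTheory GRing.Theory Order.NatMonotonyTheory.

(* Bresar's identity [A,B] b(U,V) = b(A,B) [U,V], applied to the matrix units
   U = e_uu, V = e_uv (u < v), gives b(A,B)_pq = λ(p,q) [A,B]_pq with
   λ(u,v) = b(e_uu,e_uv)_uv, provided the pair p <= q extends by a two-element
   chain above q or below p.  That always happens: otherwise a saturated chain
   from p to q would be a finite maximal chain.  The same identity yields
   λ(s,t) = λ(t,v) for s < t < v, so λ is constant on each class of maximal
   chains.  For x < y, the interval [x,y] lies in the support of the class of a
   maximal chain through x and y, and no other class supports both x and y. *)

Section IncidenceAlgebra.
Context {d : Order.disp_t} {P : porderType d} {R : comPzRingType}.
Hypothesis Plf : @locally_finite d P.
Local Open Scope ring_scope.
Implicit Types (f g h A B U V : P -> P -> R) (u v x y z : P).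

Lemma itv_spec x y : uniq (itv x y) /\ forall z, ((x <= z <= y)%O <-> z \in itv x y).
Proof.
apply: (@epsilon_spec _ (inhabits [::])
  (fun s : seq P => uniq s /\ forall z, ((x <= z <= y)%O <-> z \in s))).
have [s Hs] := Plf x y; exists (undup s); split; first exact: undup_uniq.
by move=> z; rewrite mem_undup; exact: Hs.
Qed.

Lemma itv_uniq x y : uniq (itv x y).
Proof. by case: (itv_spec x y). Qed.

Lemma mem_itv x y z : (z \in itv x y) = (x <= z <= y)%O.
Proof. by case: (itv_spec x y) => _ H; apply/idP/idP => /H. Qed.

Lemma sum_itv1 (F : P -> R) x y c :
  (forall z, z \in itv x y -> z != c -> F z = 0) ->
  \sum_(z <- itv x y) F z = if (x <= c <= y)%O then F c else 0.
Proof.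
move=> F0; case: (boolP (x <= c <= y)%O) => Hc.
  rewrite (bigD1_seq c) ?mem_itv ?itv_uniq //= big1_seq ?addr0 //.
  by move=> z /andP[zc zin]; apply: F0.
rewrite big1_seq // => z /andP[_ zin]; apply: F0 => //; apply: contraNneq Hc => <-.
by rewrite -mem_itv.
Qed.

Lemma incidence_imul f g : incidence (imul f g).
Proof.
move=> x y nxy; rewrite /imul big1_seq // => z /andP[_].
by rewrite mem_itv => /andP[xz zy]; move: nxy; rewrite (le_trans xz zy).
Qed.

Lemma imul_addl f g h x y : imul (iadd f g) h x y = imul f h x y + imul g h x y.
Proof. by rewrite /imul -big_split; apply: eq_bigr => z _; rewrite mulrDl. Qed.

Lemma imul_addr f g h x y : imul f (iadd g h) x y = imul f g x y + imul f h x y.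
Proof. by rewrite /imul -big_split; apply: eq_bigr => z _; rewrite mulrDr. Qed.

Lemma imul_subl f g h x y : imul (isub f g) h x y = imul f h x y - imul g h x y.
Proof. by rewrite /imul -sumrB; apply: eq_bigr => z _; rewrite mulrBl. Qed.

Lemma imul_subr f g h x y : imul f (isub g h) x y = imul f g x y - imul f h x y.
Proof. by rewrite /imul -sumrB; apply: eq_bigr => z _; rewrite mulrBr. Qed.

Lemma perm_itv_le x y z : z \in itv x y ->
  perm_eq (itv x z) [seq w <- itv x y | (w <= z)%O].
Proof.
rewrite mem_itv => /andP[xz zy]; apply: uniq_perm; rewrite ?filter_uniq ?itv_uniq //.
move=> w; rewrite mem_filter !mem_itv.
by case: (boolP (w <= z)%O) => wz; rewrite ?andbF //= (le_trans wz zy) !andbT.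
Qed.

Lemma perm_itv_ge x y w : w \in itv x y ->
  perm_eq (itv w y) [seq z <- itv x y | (w <= z)%O].
Proof.
rewrite mem_itv => /andP[xw wy]; apply: uniq_perm; rewrite ?filter_uniq ?itv_uniq //.
move=> z; rewrite mem_filter !mem_itv.
by case: (boolP (w <= z)%O) => wz //=; rewrite (le_trans xw wz).
Qed.

Lemma imulA f g h x y : imul (imul f g) h x y = imul f (imul g h) x y.
Proof.
rewrite /imul.
transitivity (\sum_(z <- itv x y) \sum_(w <- itv x y)
   (if (w <= z)%O then f x w * g w z * h z y else 0)).
  apply: eq_big_seq => z zin; rewrite (perm_big _ (perm_itv_le zin)) big_filter.
  by rewrite mulr_suml -big_mkcond.
rewrite exchange_big; apply: eq_big_seq => w win.
rewrite (perm_big _ (perm_itv_ge win)) big_filter mulr_sumr [RHS]big_mkcond.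
by apply: eq_bigr => z _; case: ifP => //; rewrite mulrA.
Qed.

Lemma imul_diag f g x : imul f g x x = f x x * g x x.
Proof.
rewrite /imul (sum_itv1 (c := x)) ?lexx // => z.
by rewrite mem_itv -eq_le eq_sym => ->.
Qed.

Lemma icomm_diag f g x : icomm f g x x = 0.
Proof. by rewrite /icomm /isub !imul_diag mulrC subrr. Qed.

Lemma icomm_notle f g x y : ~~ (x <= y)%O -> icomm f g x y = 0.
Proof. by move=> nxy; rewrite /icomm /isub !incidence_imul ?subr0. Qed.

Lemma icomm_not_lt f g x y : ~~ (x < y)%O -> icomm f g x y = 0.
Proof.
rewrite lt_neqAle negb_and negbK => /orP[/eqP-> | nxy]; first exact: icomm_diag.
exact: icomm_notle.
Qed.

Definition eunit u v : P -> P -> R := fun x y => ((x == u) && (y == v))%:R.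

Lemma incidence_eunit u v : (u <= v)%O -> incidence (eunit u v).
Proof.
move=> uv x y; rewrite /eunit; case: eqP => [->|//]; case: eqP => [->|//].
by rewrite uv.
Qed.

Lemma imul_eunitl u v g x y : (u <= v)%O -> incidence g ->
  imul (eunit u v) g x y = if x == u then g v y else 0.
Proof.
move=> uv Hg; rewrite /imul (sum_itv1 (c := v)); last first.
  by move=> z _ zv; rewrite /eunit (negbTE zv) andbF mul0r.
rewrite /eunit /= eqxx andbT; case: eqP => [->|_]; last by rewrite mul0r if_same.
rewrite uv mul1r /=; case: (boolP (v <= y)%O) => // nvy; by rewrite Hg.
Qed.

Lemma imul_eunitr u v f x y : (u <= v)%O -> incidence f ->
  imul f (eunit u v) x y = if y == v then f x u else 0.
Proof.
move=> uv Hf; rewrite /imul (sum_itv1 (c := u)); last first.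
  by move=> z _ zu; rewrite /eunit (negbTE zu) mulr0.
rewrite /eunit /= eqxx; case: eqP => [->|_]; last by rewrite mulr0 if_same.
rewrite uv andbT mulr1; case: (boolP (x <= u)%O) => // nxu; by rewrite Hf.
Qed.

Lemma icomm_eunit u v : (u < v)%O -> icomm (eunit u u) (eunit u v) = eunit u v.
Proof.
move=> uv; have uv' := ltW uv.
apply: functional_extensionality => x; apply: functional_extensionality => y.
have [iuu iuv] := (incidence_eunit (lexx u), incidence_eunit uv').
rewrite /icomm /isub !imul_eunitl //.
rewrite /eunit /= eqxx (gt_eqF uv) /= if_same subr0.
by case: (x == u).
Qed.

(* Bresar's identity [A,B] b(U,V) = b(A,B) [U,V]: expand b(AU, BV) in two ways. *)
Lemma icomm_mul_bider b A B U V x y : is_biderivation b ->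
  incidence A -> incidence B -> incidence U -> incidence V ->
  imul (icomm A B) (b U V) x y = imul (b A B) (icomm U V) x y.
Proof.
move=> Hb hA hB hU hV.
have iBV := incidence_imul B V; have iAU := incidence_imul A U.
have [_ _ _ AU_BV _] := Hb A U (imul B V) hA hU iBV.
have [_ _ _ _ U_BV] := Hb U B V hU hB hV.
have [_ _ _ _ A_BV] := Hb A B V hA hB hV.
have [_ _ _ _ AU_BV'] := Hb (imul A U) B V iAU hB hV.
have [_ _ _ AU_V _] := Hb A U V hA hU hV.
have [_ _ _ AU_B _] := Hb A U B hA hU hB.
have e1 : b (imul A U) (imul B V) x y =
  imul A (imul B (b U V)) x y + imul A (imul (b U B) V) x y +
  (imul B (imul (b A V) U) x y + imul (b A B) (imul V U) x y).
  by rewrite AU_BV U_BV A_BV /iadd !imul_addr !imul_addl !imulA.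
have e2 : b (imul A U) (imul B V) x y =
  imul B (imul A (b U V)) x y + imul B (imul (b A V) U) x y +
  (imul A (imul (b U B) V) x y + imul (b A B) (imul U V) x y).
  by rewrite AU_BV' AU_V AU_B /iadd !imul_addr !imul_addl !imulA.
have /eqP : b (imul A U) (imul B V) x y - b (imul A U) (imul B V) x y = 0 by rewrite subrr.
rewrite {1}e1 e2 => /eqP e12.
rewrite /icomm imul_subl imul_subr !imulA -[LHS]subr0 -e12; ring.
Qed.

End IncidenceAlgebra.

Section BiderivationCoefficients.
Context {d : Order.disp_t} {P : porderType d} {R : comPzRingType}.
Hypothesis Plf : @locally_finite d P.
Variable b : (P -> P -> R) -> (P -> P -> R) -> (P -> P -> R).
Hypothesis Hb : is_biderivation b.
Local Open Scope ring_scope.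
Implicit Types (A B : P -> P -> R) (p q s t u v w x y : P).

Definition bunit u v := b (eunit u u) (eunit u v).
Definition bcoef u v := bunit u v u v.

Lemma incidence_bider A B : incidence A -> incidence B -> incidence (b A B).
Proof. by move=> hA hB; case: (Hb hA hB hA). Qed.

Lemma incidence_bunit u v : (u <= v)%O -> incidence (bunit u v).
Proof. by move=> uv; apply: incidence_bider; apply: incidence_eunit. Qed.

Lemma bider_eunitr A B u v x y : incidence A -> incidence B -> (u < v)%O ->
  (if y == v then b A B x u else 0) = imul (icomm A B) (bunit u v) x y.
Proof.
move=> hA hB uv; have iAB := incidence_bider hA hB.
have iuu := incidence_eunit (R := R) (lexx u).
have iuv := incidence_eunit (R := R) (ltW uv).
by rewrite (icomm_mul_bider Plf) // icomm_eunit // imul_eunitr ?(ltW uv) //.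
Qed.

Lemma bider_eunitl A B u v x y : incidence A -> incidence B -> (u < v)%O ->
  (if x == u then b A B v y else 0) = imul (bunit u v) (icomm A B) x y.
Proof.
move=> hA hB uv; have iAB := incidence_bider hA hB.
have iuu := incidence_eunit (R := R) (lexx u).
have iuv := incidence_eunit (R := R) (ltW uv).
by rewrite -(icomm_mul_bider Plf) // icomm_eunit // imul_eunitl ?(ltW uv) //.
Qed.

Lemma bunit_row0 s t u v y : (s < t)%O -> (u < v)%O -> y != v -> bunit u v t y = 0.
Proof.
move=> st uv yv; have iss := incidence_eunit (R := R) (lexx s).
have ist := incidence_eunit (R := R) (ltW st).
have iuv := incidence_bunit (ltW uv).
have := bider_eunitr s y iss ist uv.
by rewrite (negbTE yv) icomm_eunit // imul_eunitl ?eqxx ?(ltW st) //.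
Qed.

Lemma bunit_col0 s t u v x : (s < t)%O -> (u < v)%O -> x != u -> bunit u v x s = 0.
Proof.
move=> st uv xu; have iss := incidence_eunit (R := R) (lexx s).
have ist := incidence_eunit (R := R) (ltW st).
have iuv := incidence_bunit (ltW uv).
have := bider_eunitl x t iss ist uv.
by rewrite (negbTE xu) icomm_eunit // imul_eunitr ?eqxx ?(ltW st) //.
Qed.

Lemma bcoef_trans s t v : (s < t)%O -> (t < v)%O -> bcoef s t = bcoef t v.
Proof.
move=> st tv; have iss := incidence_eunit (R := R) (lexx s).
have ist := incidence_eunit (R := R) (ltW st).
have itv := incidence_bunit (ltW tv).
have := bider_eunitr s v iss ist tv.
by rewrite eqxx icomm_eunit // imul_eunitl ?eqxx ?(ltW st) //.
Qed.

Lemma bider_entry_above A B p q v w : incidence A -> incidence B ->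
  (p <= q)%O -> (q < v)%O -> (v < w)%O -> b A B p q = icomm A B p q * bcoef q v.
Proof.
move=> hA hB pq qv vw; have := bider_eunitr p v hA hB qv; rewrite eqxx => ->.
rewrite /imul (sum_itv1 Plf (c := q)) ?pq ?(ltW qv) // => z _ zq.
by rewrite (bunit_col0 vw qv zq) mulr0.
Qed.

Lemma bider_entry_below A B p q u w : incidence A -> incidence B ->
  (w < u)%O -> (u < p)%O -> (p <= q)%O -> b A B p q = bcoef u p * icomm A B p q.
Proof.
move=> hA hB wu up pq; have := bider_eunitl u q hA hB up; rewrite eqxx => ->.
rewrite /imul (sum_itv1 Plf (c := p)) ?pq ?(ltW up) // => z _ zp.
by rewrite (bunit_row0 wu up zp) mul0r.
Qed.

Hypothesis Pext : forall p q, (p <= q)%O -> (exists w, w < p)%O \/ (exists w, q < w)%O.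

Lemma two_above_or_two_below p q : (p <= q)%O ->
  (exists v w, q < v /\ v < w)%O \/ (exists u w, w < u /\ u < p)%O.
Proof.
move=> pq; case: (Pext pq) => [[u up]|[v qv]].
  case: (classic (exists w, w < u)%O) => [[w wu]|nu]; first by right; exists u, w.
  have uq := lt_le_trans up pq.
  case: (Pext (ltW uq)) => [[w wu]|[v qv]]; first by case: nu; exists w.
  case: (classic (exists w, v < w)%O) => [[w vw]|nv]; first by left; exists v, w.
  by case: (Pext (ltW (lt_trans uq qv))) => [[w wu]|[w vw]]; [case: nu|case: nv]; exists w.
case: (classic (exists w, v < w)%O) => [[w vw]|nv]; first by left; exists v, w.
have pv := le_lt_trans pq qv.
case: (Pext (ltW pv)) => [[u up]|[w vw]]; last by case: nv; exists w.
case: (classic (exists w, w < u)%O) => [[w wu]|nu]; first by right; exists u, w.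
by case: (Pext (ltW (lt_trans up pv))) => [[w wu]|[w vw]]; [case: nu|case: nv]; exists w.
Qed.

Lemma bider_lt A B p q : incidence A -> incidence B -> (p < q)%O ->
  b A B p q = bcoef p q * icomm A B p q.
Proof.
move=> hA hB pq.
case: (two_above_or_two_below (ltW pq)) => [[v [w [qv vw]]]|[u [w [wu up]]]].
  by rewrite (bider_entry_above hA hB (ltW pq) qv vw) (bcoef_trans pq qv) mulrC.
by rewrite (bider_entry_below hA hB wu up (ltW pq)) (bcoef_trans up pq).
Qed.

Lemma bider_diag A B p : incidence A -> incidence B -> b A B p p = 0.
Proof.
move=> hA hB; case: (two_above_or_two_below (lexx p)) => [[v [w [pv vw]]]|[u [w [wu up]]]].
  by rewrite (bider_entry_above hA hB (lexx p) pv vw) (icomm_diag Plf) mul0r.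
by rewrite (bider_entry_below hA hB wu up (lexx p)) (icomm_diag Plf) mulr0.
Qed.

Lemma bider_not_lt A B p q : incidence A -> incidence B -> ~~ (p < q)%O -> b A B p q = 0.
Proof.
move=> hA hB; rewrite lt_neqAle negb_and negbK => /orP[/eqP-> | npq].
  exact: bider_diag.
exact: incidence_bider.
Qed.

Lemma bcoef_shiftl a m c : (a < m)%O -> (m < c)%O -> bcoef a c = bcoef m c.
Proof.
move=> am mc; have ac := lt_trans am mc.
case: (Pext (ltW ac)) => [[u ua]|[w cw]].
  by rewrite -(bcoef_trans ua ac) (bcoef_trans ua am) (bcoef_trans am mc).
by rewrite (bcoef_trans ac cw) (bcoef_trans mc cw).
Qed.

Lemma bcoef_shiftr a m c : (a < m)%O -> (m < c)%O -> bcoef a m = bcoef a c.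
Proof. by move=> am mc; rewrite (bcoef_trans am mc) (bcoef_shiftl am mc). Qed.

Lemma bcoef_widen a e m M : (a < e)%O -> (m <= a)%O -> (e <= M)%O -> bcoef a e = bcoef m M.
Proof.
move=> ae ma eM; transitivity (bcoef m e).
  by move: ma; rewrite le_eqVlt => /predU1P[-> //|ma]; exact/esym/bcoef_shiftl.
move: eM; rewrite le_eqVlt => /predU1P[-> //|eM]; apply: bcoef_shiftr eM.
exact: le_lt_trans ma ae.
Qed.

Lemma bcoef_comparable a e c f : (a < e)%O -> (c < f)%O ->
  comparable_rel a c -> comparable_rel e f -> bcoef a e = bcoef c f.
Proof.
move=> ae cf /orP[ac|ca] /orP[ef|fe].
- by rewrite (bcoef_widen ae (lexx a) ef) (bcoef_widen cf ac (lexx f)).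
- by rewrite (bcoef_widen cf ac fe).
- by rewrite (bcoef_widen ae ca ef).
- by rewrite (bcoef_widen ae ca (lexx e)) (bcoef_widen cf (lexx c) fe).
Qed.

End BiderivationCoefficients.

Section Covers.
Context {d : Order.disp_t} {T : porderType d}.
Hypothesis Tlf : @locally_finite d T.
Local Open Scope order_scope.
Implicit Types (a c q w x z : T).

Lemma increasing_notin_seq (f : nat -> T) (s : seq T) :
  (forall n, f n < f n.+1) -> ~ (forall n, f n \in s).
Proof.
move=> /homo_ltn_lt f_lt f_s.
have f_inj : injective f.
  move=> n m fnm; case: (ltngtP n m) => // nm; have := f_lt _ _ nm; by rewrite fnm ltxx.
have sub : {subset map f (iota 0 (size s).+1) <= s} by move=> z /mapP[n _ ->].
have uniq_f : uniq (map f (iota 0 (size s).+1)) by rewrite map_inj_uniq ?iota_uniq.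
by have := uniq_leq_size uniq_f sub; rewrite size_map size_iota ltnn.
Qed.

Lemma size_itv_lt a w' w : a <= w' -> w' < w -> (size (itv a w') < size (itv a w))%N.
Proof.
move=> aw' w'w.
have U : uniq (w :: itv a w').
  rewrite /= itv_uniq // andbT mem_itv //; apply/negP => /andP[_ ww'].
  by have := lt_le_trans w'w ww'; rewrite ltxx.
apply: uniq_leq_size U _ => z; rewrite in_cons !mem_itv //.
case/predU1P => [->|/andP[az zw']]; first by rewrite (le_trans aw' (ltW w'w)) lexx.
by rewrite az (le_trans zw' (ltW w'w)).
Qed.

Definition covers a c := a < c /\ forall z, a < z -> ~~ (z < c).

Lemma exists_cover_le a w : a < w -> exists c, covers a c /\ c <= w.
Proof.
move: {2}(size (itv a w)) (leqnn (size (itv a w))) => n.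
elim: n w => [|n IH] w Hs aw.
  have : w \in itv a w by rewrite mem_itv // (ltW aw) lexx.
  by move: Hs; rewrite leqn0 size_eq0 => /eqP ->.
case: (classic (exists z, a < z /\ z < w)) => [[z [az zw]]|nz].
  have Hz : (size (itv a z) <= n)%N.
    by rewrite -ltnS; apply: leq_trans Hs; apply: size_itv_lt => //; exact: ltW.
  have [c [ac cz]] := IH z Hz az.
  by exists c; split=> //; exact: le_trans cz (ltW zw).
exists w; split=> //; split=> // z az; apply/negP => zw; apply: nz; by exists z.
Qed.

Definition cover_le a w : T := epsilon (inhabits a) (fun c => covers a c /\ c <= w).

Lemma cover_leP a w : a < w -> covers a (cover_le a w) /\ cover_le a w <= w.
Proof.
by move=> aw; exact: (epsilon_spec _ (fun c => covers a c /\ c <= w) (exists_cover_le aw)).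
Qed.

Section Iterates.
Variable step : T -> T.
Hypothesis step_ge : forall x, x <= step x.

Definition orbit_set x : T -> Prop := fun z => exists n, z = iter n step x.

Lemma iter_step_mono x : {homo (fun n => iter n step x) : n m / (n <= m)%N >-> n <= m}.
Proof. by apply: nondecnP => n; exact: step_ge. Qed.

Lemma orbit_set_chain x : is_chain (orbit_set x).
Proof.
move=> _ _ [n ->] [m ->]; apply/orP; case: (leqP n m) => nm.
  by left; exact: iter_step_mono.
by right; apply: iter_step_mono; exact: ltnW.
Qed.

Lemma orbit_set_ge x z : orbit_set x z -> x <= z.
Proof. by move=> [n ->]; apply: (@iter_step_mono x 0). Qed.

(* If every step below [w] is a cover, the orbit cannot jump over an element
   [w] comparable with all of it; local finiteness forbids staying below [w]. *)
Lemma orbit_set_hits x w : x <= w ->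
  (forall n, iter n step x < w -> covers (iter n step x) (iter n.+1 step x)) ->
  (forall z, orbit_set x z -> comparable_rel w z) -> orbit_set x w.
Proof.
move=> xw cov cmp; apply: NNPP => nhit.
have below n : iter n step x < w.
  elim: n => [|n IH].
    by rewrite lt_neqAle xw andbT; apply: contra_notN nhit => /eqP <-; exists 0.
  have [_ nbetween] := cov n IH.
  have wn : w != iter n.+1 step x by apply: contra_notN nhit => /eqP ->; exists n.+1.
  case/orP: (cmp _ (ex_intro _ n.+1 erefl)) => [wle|lew].
    by have := nbetween w IH; rewrite lt_neqAle wn wle.
  by rewrite lt_neqAle lew andbT eq_sym.
apply: (@increasing_notin_seq (fun n => iter n step x) (itv x w)).
  by move=> n; case: (cov n (below n)).
by move=> n; rewrite mem_itv // (orbit_set_ge (ex_intro _ n erefl)) ltW.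
Qed.

End Iterates.

(* [segment a c] is a saturated chain from [a] up to [c]; [ray q] climbs from
   [q] by covers for as long as there is something above. *)
Definition segment_step c x := if x < c then cover_le x c else x.

Lemma segment_step_ge c x : x <= segment_step c x.
Proof. by rewrite /segment_step; case: ifP => // xc; case: (cover_leP xc) => -[/ltW]. Qed.

Definition segment a c := orbit_set (segment_step c) a.

Lemma segment_chain a c : is_chain (segment a c).
Proof. exact: orbit_set_chain (segment_step_ge c) a. Qed.

Lemma segment_bound a c z : a <= c -> segment a c z -> a <= z <= c.
Proof.
move=> ac [n ->]; rewrite (orbit_set_ge (@segment_step_ge c) (ex_intro _ n erefl)) /=.
elim: n => //= n IH; rewrite /segment_step; case: ifP => // xc.
by case: (cover_leP xc).
Qed.

Lemma segment_hits a c w : a <= w -> w <= c ->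
  (forall z, segment a c z -> comparable_rel w z) -> segment a c w.
Proof.
move=> aw wc; apply: (orbit_set_hits (@segment_step_ge c) aw) => n nw.
by rewrite /= /segment_step (lt_le_trans nw wc); case: (cover_leP (lt_le_trans nw wc)).
Qed.

Definition ray_step x :=
  if excluded_middle_informative (exists w, x < w)
  then cover_le x (epsilon (inhabits x) (fun w => x < w)) else x.

Lemma ray_stepP x : (exists w, x < w) -> covers x (ray_step x).
Proof.
rewrite /ray_step; case: excluded_middle_informative => // ex _.
exact: (proj1 (cover_leP (epsilon_spec (inhabits x) (fun w => x < w) ex))).
Qed.

Lemma ray_step_ge x : x <= ray_step x.
Proof.
case: (classic (exists w, x < w)) => ex; first by case: (ray_stepP ex) => /ltW.
by rewrite /ray_step; case: excluded_middle_informative.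
Qed.

Definition ray q := orbit_set ray_step q.

Lemma ray_chain q : is_chain (ray q).
Proof. exact: orbit_set_chain ray_step_ge q. Qed.

Lemma ray_ge q z : ray q z -> q <= z.
Proof. exact: (orbit_set_ge ray_step_ge). Qed.

Lemma ray_hits q w : q <= w -> (forall z, ray q z -> comparable_rel w z) -> ray q w.
Proof.
move=> qw; apply: (orbit_set_hits ray_step_ge qw) => n nw.
by apply: ray_stepP; exists w.
Qed.

End Covers.

Section MaximalChains.
Context {d : Order.disp_t} {P : porderType d}.
Hypothesis Plf : @locally_finite d P.
Local Open Scope order_scope.
Implicit Types (L S U m l : P -> Prop) (a p q w x y z : P).

Lemma comparable_relC x y : comparable_rel x y -> comparable_rel y x.
Proof. by rewrite /comparable_rel orbC. Qed.

Definition is_maxchain m :=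
  is_chain m /\ forall w, (forall a, m a -> comparable_rel w a) -> m w.

Definition max_below L p := (forall a, L a -> a < p) /\ is_chain L /\
  forall w, w < p -> (forall a, L a -> comparable_rel w a) -> L w.

Definition max_above U q := (forall a, U a -> q < a) /\ is_chain U /\
  forall w, q < w -> (forall a, U a -> comparable_rel w a) -> U w.

Definition max_between S p q := (forall a, S a -> p <= a <= q) /\ is_chain S /\
  S p /\ S q /\ forall w, p <= w <= q -> (forall a, S a -> comparable_rel w a) -> S w.

Lemma maxchain_glue L S U p q : p <= q ->
  max_below L p -> max_between S p q -> max_above U q ->
  is_maxchain (fun a => L a \/ S a \/ U a).
Proof.
move=> pq [Lp [Lc Lm]] [Sb [Sc [Sp [Sq Sm]]]] [Uq [Uc Um]]; split.
  have LS a c : L a -> S c -> comparable_rel a c.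
    by move=> /Lp ap /Sb /andP[pc _]; rewrite /comparable_rel (le_trans (ltW ap) pc).
  have LU a c : L a -> U c -> comparable_rel a c.
    move=> /Lp ap /Uq qc.
    by rewrite /comparable_rel (le_trans (ltW ap) (le_trans pq (ltW qc))).
  have SU a c : S a -> U c -> comparable_rel a c.
    by move=> /Sb /andP[_ aq] /Uq qc; rewrite /comparable_rel (le_trans aq (ltW qc)).
  move=> a c [ha|[ha|ha]] [hc|[hc|hc]]; try by [apply: Lc|apply: Sc|apply: Uc].
  - exact: LS. - exact: LU. - exact: comparable_relC (LS _ _ hc ha). - exact: SU.
  - exact: comparable_relC (LU _ _ hc ha). - exact: comparable_relC (SU _ _ hc ha).
move=> w Hw.
have /orP[wp|pw] : comparable_rel w p by apply: Hw; right; left.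
  move: wp; rewrite le_eqVlt => /predU1P[->|wp]; first by right; left.
  by left; apply: Lm => // a La; apply: Hw; left.
have /orP[wq|qw] : comparable_rel w q by apply: Hw; right; left.
  by right; left; apply: Sm; [rewrite pw wq | move=> a Sa; apply: Hw; right; left].
move: qw; rewrite le_eqVlt => /predU1P[<-|qw]; first by right; left.
by right; right; apply: Um => // a Ua; apply: Hw; right; right.
Qed.

Definition segment_via p z q a := segment p z a \/ segment z q a.

Lemma max_between_segment_via p z q : p <= z -> z <= q ->
  max_between (segment_via p z q) p q.
Proof.
move=> pz zq.
have b1 a : segment p z a -> p <= a <= z by exact: segment_bound.
have b2 a : segment z q a -> z <= a <= q by exact: segment_bound.
have zS : segment z q z by exists 0.
split.
  move=> a [/b1 /andP[-> az]|/b2 /andP[za ->]]; first by rewrite (le_trans az zq).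
  by rewrite (le_trans pz za).
split.
  move=> a c [ha|ha] [hc|hc]; try exact: segment_chain ha hc.
    case/andP: (b1 _ ha) => _ az; case/andP: (b2 _ hc) => zc _.
    by rewrite /comparable_rel (le_trans az zc).
  case/andP: (b2 _ ha) => za _; case/andP: (b1 _ hc) => _ cz.
  by rewrite /comparable_rel (le_trans cz za) orbT.
split; first by left; exists 0.
split.
  by right; apply: segment_hits => // a /b2 /andP[_ aq]; rewrite /comparable_rel aq orbT.
move=> w /andP[pw wq] Hw; case/orP: (Hw z (or_intror zS)) => [wz|zw].
  by left; apply: segment_hits => // a Sa; apply: Hw; left.
by right; apply: segment_hits => // a Sa; apply: Hw; right.
Qed.

Lemma max_above_ray q : max_above (fun a => q < a /\ ray q a) q.
Proof.
split; first by move=> a [].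
split; first by move=> a c [_ ha] [_ hc]; exact: ray_chain ha hc.
move=> w qw Hw; split=> //; apply: (ray_hits Plf (ltW qw)) => z rz.
move: (ray_ge Plf rz); rewrite le_eqVlt => /predU1P[<-|qz].
  by rewrite /comparable_rel (ltW qw) orbT.
exact: Hw.
Qed.

Lemma locally_finite_dual : @locally_finite _ P^d.
Proof. by move=> x y; have [s Hs] := Plf y x; exists s => z; rewrite !leEdual andbC. Qed.

Lemma max_below_ray p : max_below (fun a => a < p /\ @ray _ P^d p a) p.
Proof.
split; first by move=> a [].
split.
  move=> a c [_ ha] [_ hc]; rewrite /comparable_rel orbC.
  exact: (ray_chain locally_finite_dual ha hc).
move=> w wp Hw; split=> //; apply: (ray_hits locally_finite_dual) => [|z rz].
  by rewrite leEdual ltW.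
move: (ray_ge locally_finite_dual rz); rewrite leEdual le_eqVlt => /predU1P[->|zp].
  by rewrite /comparable_rel !leEdual (ltW wp) orbT.
by rewrite /comparable_rel !leEdual orbC; exact: Hw.
Qed.

Lemma max_below0 p : (forall w, ~ w < p) -> max_below (fun _ => False) p.
Proof. by move=> np; split=> //; split=> // w /np. Qed.

Lemma max_above0 q : (forall w, ~ q < w) -> max_above (fun _ => False) q.
Proof. by move=> nq; split=> //; split=> // w /nq. Qed.

Lemma maxchain_in Q m : is_maxchain m -> (forall a, m a -> Q a) -> maximal_chain_in Q m.
Proof.
move=> [mc mm] mQ; split=> //; split=> // l' ml' _ cl' w lw.
by apply: mm => a ma; exact: cl' _ _ lw (ml' _ ma).
Qed.

Lemma exists_maxchain_through p q : p <= q -> exists m, is_maxchain m /\ m p /\ m q.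
Proof.
move=> pq; have S := max_between_segment_via (lexx p) pq.
have [_ [_ [Sp [Sq _]]]] := S.
eexists; split; first exact: maxchain_glue pq (max_below_ray p) S (max_above_ray q).
by split; right; left.
Qed.

End MaximalChains.

Lemma exists_below_or_above {d : Order.disp_t} {P : porderType d} :
  @locally_finite d P -> (forall l : P -> Prop, maximal_chain l -> ~ finite_set l) ->
  forall p q : P, (p <= q)%O -> (exists w, w < p)%O \/ (exists w, q < w)%O.
Proof.
move=> Plf Pinf p q pq; apply: NNPP => /not_or_and[np nq].
have S := max_between_segment_via Plf (lexx p) pq.
apply: (Pinf (fun a => False \/ segment_via p p q a \/ False)).
  apply: maxchain_in => //; apply: maxchain_glue pq _ S _.
    by apply: max_below0 => w wp; apply: np; exists w.
  by apply: max_above0 => w qw; apply: nq; exists w.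
exists (itv p q) => a [[]|[Sa|[]]].
by rewrite mem_itv //; case: S => Sb _; exact: Sb.
Qed.

Lemma clos_rt_sym (T : Type) (r : T -> T -> Prop) : (forall x y, r x y -> r y x) ->
  forall x y, Relation_Operators.clos_refl_trans T r x y ->
              Relation_Operators.clos_refl_trans T r y x.
Proof.
move=> rC x y; elim=> [a c /rC|a|a c e _ IH1 _ IH2].
- exact: Relation_Operators.rt_step.
- exact: Relation_Operators.rt_refl.
- exact: Relation_Operators.rt_trans IH2 IH1.
Qed.

Section ChainClasses.
Context {d : Order.disp_t} {P : porderType d}.
Hypothesis Plf : @locally_finite d P.
Hypothesis Pext : forall p q : P, (p <= q)%O -> (exists w, w < p)%O \/ (exists w, q < w)%O.
Local Open Scope order_scope.
Implicit Types (Q l m : P -> Prop) (a w x y z : P).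

Lemma component_closed Q x w : is_component Q -> Q x -> comparable_rel x w -> Q w.
Proof.
move=> [x0 ->] Qx xw; apply: Relation_Operators.rt_trans Qx _.
exact: Relation_Operators.rt_step.
Qed.

Lemma component_eq Q x : is_component Q -> Q x -> Q = connectedP x.
Proof.
move=> [x0 ->] Qx; apply: functional_extensionality => w.
apply: propositional_extensionality; split=> h; last exact: Relation_Operators.rt_trans Qx h.
apply: Relation_Operators.rt_trans h.
exact: clos_rt_sym comparable_relC _ _ Qx.
Qed.

Lemma maxchain_component m x : is_maxchain m -> m x -> maximal_chain_in (connectedP x) m.
Proof.
move=> [mc mm] mx; apply: maxchain_in => // a ma.
exact: Relation_Operators.rt_step (mc _ _ mx ma).
Qed.

Lemma max_below_in Q l x : is_component Q -> maximal_chain_in Q l -> l x ->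
  max_below (fun a => l a /\ a < x) x.
Proof.
move=> cQ [lQ [lc lm]] lx; split; first by move=> a [].
split; first by move=> a c [la _] [lc' _]; exact: lc.
move=> w wx Hw.
have wl a : l a -> comparable_rel w a.
  move=> la; case/orP: (lc _ _ la lx) => ax.
    move: ax; rewrite le_eqVlt => /predU1P[->|ax]; first by rewrite /comparable_rel (ltW wx).
    exact: Hw.
  by rewrite /comparable_rel (le_trans (ltW wx) ax).
split=> //; apply: (lm (fun a => l a \/ a = w)); first by move=> a; left.
- move=> a [/lQ //|->]; apply: component_closed cQ (lQ _ lx) _.
  by rewrite /comparable_rel (ltW wx) orbT.
- move=> a c [la|->] [lc'|->]; [exact: lc|exact: comparable_relC (wl _ la)|exact: wl|].
  by rewrite /comparable_rel lexx.
- by right.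
Qed.

Lemma max_above_in Q l y : is_component Q -> maximal_chain_in Q l -> l y ->
  max_above (fun a => l a /\ y < a) y.
Proof.
move=> cQ [lQ [lc lm]] ly; split; first by move=> a [].
split; first by move=> a c [la _] [lc' _]; exact: lc.
move=> w yw Hw.
have wl a : l a -> comparable_rel w a.
  move=> la; case/orP: (lc _ _ la ly) => ay.
    by rewrite /comparable_rel (le_trans ay (ltW yw)) orbT.
  move: ay; rewrite le_eqVlt => /predU1P[<-|ya]; first by rewrite /comparable_rel (ltW yw) orbT.
  exact: Hw.
split=> //; apply: (lm (fun a => l a \/ a = w)); first by move=> a; left.
- move=> a [/lQ //|->]; apply: component_closed cQ (lQ _ ly) _.
  by rewrite /comparable_rel (ltW yw).
- move=> a c [la|->] [lc'|->]; [exact: lc|exact: comparable_relC (wl _ la)|exact: wl|].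
  by rewrite /comparable_rel lexx.
- by right.
Qed.

Definition splice l1 x z y l2 a :=
  (l1 a /\ a < x) \/ segment_via x z y a \/ (l2 a /\ y < a).

Lemma splice_maxchain Q l1 l2 x z y : is_component Q ->
  maximal_chain_in Q l1 -> maximal_chain_in Q l2 -> l1 x -> l2 y -> x <= z -> z <= y ->
  [/\ is_maxchain (splice l1 x z y l2), splice l1 x z y l2 x & splice l1 x z y l2 y].
Proof.
move=> cQ ml1 ml2 l1x l2y xz zy.
have S := max_between_segment_via Plf xz zy; have [_ [_ [Sx [Sy _]]]] := S.
split; [|by right; left..].
exact: maxchain_glue (le_trans xz zy) (max_below_in cQ ml1 l1x) S (max_above_in cQ ml2 l2y).
Qed.

Definition chain_class Q m l := maximal_chain_in Q l /\ chain_connected Q m l.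

Lemma chain_connected_sym Q l1 l2 : chain_connected Q l1 l2 -> chain_connected Q l2 l1.
Proof.
apply: clos_rt_sym => a c [ma [mc [x [y [xy [ax [ay [cx cy]]]]]]]].
by split=> //; split=> //; exists x, y.
Qed.

Lemma chain_connected_trans Q l1 l2 l3 :
  chain_connected Q l1 l2 -> chain_connected Q l2 l3 -> chain_connected Q l1 l3.
Proof. exact: Relation_Operators.rt_trans. Qed.

Lemma chain_connected_shared Q l1 l2 x y :
  maximal_chain_in Q l1 -> maximal_chain_in Q l2 -> x < y ->
  l1 x -> l1 y -> l2 x -> l2 y -> chain_connected Q l1 l2.
Proof.
by move=> ml1 ml2 xy *; apply: Relation_Operators.rt_step; do 2!split=> //; exists x, y.
Qed.

Lemma chain_class_eq Q l1 l2 : chain_connected Q l1 l2 -> chain_class Q l1 = chain_class Q l2.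
Proof.
move=> c12; apply: functional_extensionality => l; apply: propositional_extensionality.
split=> -[ml cl]; split=> //; apply: chain_connected_trans cl => //.
exact: chain_connected_sym.
Qed.

Lemma class_support_itv m x y z : is_maxchain m -> m x -> m y -> x < y -> x <= z <= y ->
  class_support (chain_class (connectedP x) m) z.
Proof.
move=> Hm mx my xy /andP[xz zy].
have cQ : is_component (connectedP x) by exists x.
have mQ := maxchain_component Hm mx.
have [Hm' m'x m'y] := splice_maxchain cQ mQ mQ mx my xz zy.
exists (splice m x z y m); split; last by right; left; right; exists 0.
split; first exact: maxchain_component Hm' m'x.
exact: chain_connected_shared mQ (maxchain_component Hm' m'x) xy mx my m'x m'y.
Qed.

(* A class containing both [x] and [y] contains a maximal chain through both:
   splice a chain of the class at [x] to one at [y]; the splice meets one of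
   them in two points since [x] and [y] cannot both be extremal. *)
Lemma chain_class_unique m x y Q C : is_maxchain m -> m x -> m y -> x < y ->
  is_component Q -> is_chain_class Q C -> class_support C x -> class_support C y ->
  Q = connectedP x /\ C = chain_class (connectedP x) m.
Proof.
move=> Hm mx my xy cQ [l0 [_ ->]] [l1 [[ml1 c1] l1x]] [l2 [[ml2 c2] l2y]].
have eQ := component_eq cQ (proj1 ml1 _ l1x); subst Q; split=> //.
have [Hm' m'x m'y] := splice_maxchain cQ ml1 ml2 l1x l2y (lexx x) (ltW xy).
set m' := splice l1 x x y l2 in Hm' m'x m'y.
have mQ' := maxchain_component Hm' m'x.
have c0m' : chain_connected (connectedP x) l0 m'.
  case: (classic (exists a, l1 a /\ a < x)) => [[a [l1a ax]]|nbelow].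
    apply: (chain_connected_trans c1).
    have m'a : m' a by left.
    exact: chain_connected_shared ml1 mQ' ax l1a l1x m'a m'x.
  case: (classic (exists a, l2 a /\ y < a)) => [[a [l2a ya]]|nabove].
    apply: (chain_connected_trans c2).
    have m'a : m' a by right; right.
    exact: chain_connected_shared ml2 mQ' ya l2y l2a m'y m'a.
  have [_ [_ below]] := max_below_in cQ ml1 l1x.
  have [_ [_ above]] := max_above_in cQ ml2 l2y.
  case: (Pext (ltW xy)) => [[w wx]|[w yw]].
    by case: (nbelow); exists w; apply: below => // a L1a; case: nbelow; exists a.
  by case: (nabove); exists w; apply: above => // a L2a; case: nabove; exists a.
have cmm' := chain_connected_shared (maxchain_component Hm mx) mQ' xy mx my m'x m'y.
apply: chain_class_eq; apply: chain_connected_trans c0m' _.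
exact: chain_connected_sym.
Qed.

End ChainClasses.

Section ClassCoefficient.
Context {d : Order.disp_t} {P : porderType d} {R : comPzRingType}.
Hypothesis Plf : @locally_finite d P.
Variable b : (P -> P -> R) -> (P -> P -> R) -> (P -> P -> R).
Hypothesis Hb : is_biderivation b.
Hypothesis Pext : forall p q : P, (p <= q)%O -> (exists w, w < p)%O \/ (exists w, q < w)%O.
Local Open Scope order_scope.
Implicit Types (Q l : P -> Prop) (C : (P -> Prop) -> Prop) (x y : P).

Definition constant_on l (k : R) := forall x y, l x -> l y -> x < y -> bcoef b x y = k.

Lemma constant_on_chain l x y :
  is_chain l -> l x -> l y -> x < y -> constant_on l (bcoef b x y).
Proof.
move=> lc lx ly xy a e la le ae.
by apply: (bcoef_comparable Plf Hb Pext) => //; exact: lc.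
Qed.

Lemma constant_on_connected Q l1 l2 k :
  chain_connected Q l1 l2 -> constant_on l1 k -> constant_on l2 k.
Proof.
elim=> [l l' [_ [[_ [c' _]] [x [y [xy [lx [ly [l'x l'y]]]]]]]] lk|//|].
  by rewrite -(lk x y lx ly xy); apply: constant_on_chain.
by move=> l l' l'' _ IH1 _ IH2 /IH1/IH2.
Qed.

Definition class_coef_spec C (k : R) :=
  exists l x y, [/\ C l, l x, l y, x < y & k = bcoef b x y].

Definition class_coef C : R := epsilon (inhabits 0%R) (class_coef_spec C).

Lemma class_coefE Q C l x y : is_chain_class Q C -> C l -> l x -> l y -> x < y ->
  bcoef b x y = class_coef C.
Proof.
move=> [l0 [_ eC]] Cl lx ly xy; rewrite /class_coef.
have [l1 [x1 [y1 [C1 l1x l1y x1y1 ->]]]] :=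
  epsilon_spec (inhabits 0%R) (class_coef_spec C)
    (ex_intro _ _ (ex_intro _ l (ex_intro _ x (ex_intro _ y (And5 Cl lx ly xy erefl))))).
move: Cl C1; rewrite eC => -[ml c0l] [ml1 c01].
have K1 := constant_on_chain (proj1 (proj2 ml1)) l1x l1y x1y1.
have c1l := chain_connected_trans (chain_connected_sym c01) c0l.
exact: constant_on_connected c1l K1 _ _ lx ly xy.
Qed.

End ClassCoefficient.

Section RestrictedCommutators.
Context {d : Order.disp_t} {P : porderType d} {R : comPzRingType}.
Hypothesis Plf : @locally_finite d P.
Local Open Scope ring_scope.
Implicit Types (S : P -> Prop) (f g : P -> P -> R) (x y : P).

Lemma irestr_out S f x y : ~ (S x /\ S y) -> irestr S f x y = 0.
Proof. by rewrite /irestr; case: excluded_middle_informative. Qed.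

Lemma irestr_in S f x y : S x -> S y -> irestr S f x y = f x y.
Proof. by move=> Sx Sy; rewrite /irestr; case: excluded_middle_informative => // -[]. Qed.

Lemma icomm_irestr_supp S f g x y :
  icomm (irestr S f) (irestr S g) x y != 0 -> S x /\ S y.
Proof.
move=> /eqP nz; apply: NNPP => nS; apply: nz.
have term0 (h h' : P -> P -> R) z : irestr S h x z * irestr S h' z y = 0.
  case: (classic (S x)) => Sx; last by rewrite irestr_out ?mul0r // => -[].
  by rewrite (@irestr_out S h' z y) ?mulr0 // => -[_ Sy]; apply: nS.
by rewrite /icomm /isub /imul !big1 ?subr0 // => z _; exact: term0.
Qed.

Lemma icomm_irestr_itv S f g x y : (forall z, (x <= z <= y)%O -> S z) ->
  icomm (irestr S f) (irestr S g) x y = icomm f g x y.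
Proof.
move=> Sitv; rewrite /icomm /isub /imul; congr (_ - _); apply: eq_big_seq => z;
  rewrite mem_itv // => /andP[xz zy]; have xy := le_trans xz zy;
  by rewrite !irestr_in //; apply: Sitv; rewrite ?lexx ?xz ?zy ?xy.
Qed.

End RestrictedCommutators.

Theorem mainTheorem18 (R : comPzRingType) (d : Order.disp_t) (P : porderType d)
  (Hlf : @locally_finite d P)
  (H3 : exists a b c : P, [/\ a != b, b != c & a != c])
  (Hinf : forall l : P -> Prop, maximal_chain l -> ~ finite_set l)
  (b : (P -> P -> R) -> (P -> P -> R) -> (P -> P -> R))
  (Hb : is_biderivation b) :
  exists lam : (P -> Prop) -> ((P -> Prop) -> Prop) -> R,
    forall alpha beta : P -> P -> R, incidence alpha -> incidence beta ->
    forall x y : P,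
    exists s : seq ((P -> Prop) * ((P -> Prop) -> Prop)),
      [/\ List.NoDup s,
          (forall k, List.In k s -> is_component k.1 /\ is_chain_class k.1 k.2),
          (forall Q C, is_component Q -> is_chain_class Q C ->
             (lam Q C * icomm (irestr (class_support C) alpha)
                              (irestr (class_support C) beta) x y != 0)%R ->
             List.In (Q, C) s)
        & b alpha beta x y =
          (\sum_(k <- s) lam k.1 k.2 * icomm (irestr (class_support k.2) alpha)
                                              (irestr (class_support k.2) beta) x y)%R].
Proof.
have Pext := exists_below_or_above Hlf Hinf.
exists (fun _ C => class_coef b C) => alpha beta ha hb x y.
have [xy|nxy] := boolP (x < y)%O; last first.
  exists [::]; split=> //; first exact: List.NoDup_nil.
    by move=> Q C _ _; rewrite icomm_not_lt // mulr0 eqxx.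
  by rewrite big_nil (bider_not_lt Hlf Hb Pext).
have [m [Hm [mx my]]] := exists_maxchain_through Hlf (ltW xy).
have Cm : chain_class (connectedP x) m m.
  by split; [exact: maxchain_component Hm mx | exact: Relation_Operators.rt_refl].
have cC : is_chain_class (connectedP x) (chain_class (connectedP x) m).
  by exists m; split=> //; case: Cm.
exists [:: (connectedP x, chain_class (connectedP x) m)]; split.
- by constructor; [|exact: List.NoDup_nil].
- by move=> k [<-|[]]; split=> //; exists x.
- move=> Q C cQ cC' /eqP nz.
  have [Cx Cy] : class_support C x /\ class_support C y.
    apply: (icomm_irestr_supp (f := alpha) (g := beta)).
    by apply/eqP => t0; apply: nz; rewrite t0 mulr0.
  by have [-> ->] := chain_class_unique Hlf Pext Hm mx my xy cQ cC' Cx Cy; left.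
- rewrite big_seq1 /= (bider_lt Hlf Hb Pext ha hb xy).
  rewrite (class_coefE Hlf Hb Pext cC Cm mx my xy).
  by rewrite (icomm_irestr_itv Hlf) // => z; exact: class_support_itv Hm mx my xy.
Qed.
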